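(* For $n\ge1$ let $c(n)$ be the number of nonempty words $\omega$ such that $\omega\omega\omega$ is a suffix of $\mathbb{T}[1,n]$ and $\omega\omega\omega$ is not a factor of $\mathbb{T}[1,n-1]$. Then $c(n)=0$ for $n\leq57$; for $n\geq58$, let $m$ be such that $t_{m-1}+2t_{m-4}\leq n<t_{m}+2t_{m-3}$; then $m\geq7$ and $c(n)=1$ if and only if $n\leq t_{m-1}+k_{m+1}-2$.
   Context: The Tribonacci sequence $\mathbb{T}=x_1x_2x_3\cdots$ is the fixed point (infinite word starting with $a$) of the substitution $\sigma(a)=ab$, $\sigma(b)=ac$, $\sigma(c)=a$ over $\{a,b,c\}$. For $n\ge1$, $\mathbb{T}[1,n]=x_1\cdots x_n$ is its prefix of length $n$. The Tribonacci numbers are $t_m=|\sigma^m(a)|$ for $m\ge0$, with $t_{-2}=0$, $t_{-1}=1$; thus $t_0=1,t_1=2,t_2=4$ and $t_m=t_{m-1}+t_{m-2}+t_{m-3}$. The kernel numbers are $k_0=0$, $k_1=k_2=1$, $k_m=k_{m-1}+k_{m-2}+k_{m-3}-1$ for $m\ge3$. *)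

From HB Require Import structures.
From mathcomp Require Import all_boot.
Set Implicit Arguments. Unset Strict Implicit. Unset Printing Implicit Defensive.

Inductive letter := La | Lb | Lc.

Definition letter_eqb (x y : letter) : bool :=
  match x, y with La, La | Lb, Lb | Lc, Lc => true | _, _ => false end.

Lemma letter_eqP : Equality.axiom letter_eqb.
Proof. by case; case; constructor. Qed.

HB.instance Definition _ := hasDecEq.Build letter letter_eqP.

Definition sigma_letter (x : letter) : seq letter :=
  match x with La => [:: La; Lb] | Lb => [:: La; Lc] | Lc => [:: La] end.

Definition sigma (w : seq letter) : seq letter := flatten (map sigma_letter w).

Definition sigma_pow (k : nat) : seq letter := iter k sigma [:: La].

(* T[1,n]: the prefix of length n of the fixed point T = lim sigma^k(a).
   Since |sigma^n(a)| = t_n >= n and each sigma^k(a) is a prefix of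
   sigma^(k+1)(a), this is the length-n prefix of T. *)
Definition Tpref (n : nat) : seq letter := take n (sigma_pow n).

(* A computationally efficient equal version (truncating at each step;
   valid since sigma is non-erasing, take n (sigma w) = take n (sigma (take n w))). *)
Definition Tpref_fast (n : nat) : seq letter :=
  iter n (fun w => take n (sigma w)) [:: La].

(* Shifted Tribonacci numbers: tri j = t_(j-2), so tri 0 = t_(-2) = 0,
   tri 1 = t_(-1) = 1, tri 2 = t_0 = 1, tri 3 = t_1 = 2, tri 4 = t_2 = 4. *)
Fixpoint tri (j : nat) : nat :=
  match j with
  | 0 => 0
  | S j1 => match j1 with
            | 0 => 1
            | S j2 => match j2 with
                      | 0 => 1
                      | S j3 => tri j1 + tri j2 + tri j3
                      end
            end
  end.


Fixpoint kern (m : nat) : nat :=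
  match m with
  | 0 => 0
  | S m1 => match m1 with
            | 0 => 1
            | S m2 => match m2 with
                      | 0 => 1
                      | S m3 => kern m1 + kern m2 + kern m3 - 1
                      end
            end
  end.

Definition factors (s : seq letter) : seq (seq letter) :=
  [seq take l (drop i s) | i <- iota 0 (size s).+1, l <- iota 0 (size s).+1].

Definition new_cube (n : nat) (w : seq letter) : bool :=
  [&& 0 < size w, suffix (w ++ w ++ w) (Tpref n) & ~~ infix (w ++ w ++ w) (Tpref n.-1)].

(* c(n): the number of such words omega.  Every such omega is a factor of
   T[1,n], so it suffices to count among the (distinct) factors of T[1,n]. *)
Definition c (n : nat) : nat := count (new_cube n) (undup (factors (Tpref n))).

Example tri_check : [seq tri j | j <- iota 0 9] = [:: 0; 1; 1; 2; 4; 7; 13; 24; 44]. Proof. by []. Qed.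
Example kern_check : [seq kern j | j <- iota 0 7] = [:: 0; 1; 1; 1; 2; 3; 5]. Proof. by []. Qed.
Example T_check : Tpref 8 = [:: La; Lb; La; Lc; La; Lb; La; La]. Proof. by []. Qed.

(* Write T = x_0 x_1 x_2 ... (indices from 0) and pos j = |sigma(x_0 ... x_(j-1))|.
   Since sigma(T) = T, the letters a of T are exactly those at the positions pos j,
   and the other letters are isolated.  Hence a maximal run of period p >= 2 and
   length >= 3p - 1 starts and ends with an a at such positions, and it is the
   sigma-image, followed by a, of a maximal run of a smaller period q with the same
   length property.  Descending to period 1, whose only long run is aa, shows that
   every such run is an occurrence of
     F_k = sigma^k(a) sigma^k(a) sigma^(k-1)(a) ... sigma^0(a),
   of period t_k, at a position >= P_k = t_(k+2) + t_(k+1), where F_k does occur.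
   As T has no fourth powers, the cube of period l ending at position n is new
   exactly when l = t_k and P_k + 3 t_k <= n <= P_k + |F_k|.  These windows lie in
   disjoint bands t_(k+3) + 2 t_k <= n < t_(k+4) + 2 t_(k+1), and |F_k| is computed
   through the kernel numbers. *)

From mathcomp Require Import all_boot zify.
From Stdlib Require Import Classical.
Set Implicit Arguments. Unset Strict Implicit. Unset Printing Implicit Defensive.

(** * The Tribonacci word *)

Lemma sigma_cat u v : sigma (u ++ v) = sigma u ++ sigma v.
Proof. by rewrite /sigma map_cat flatten_cat. Qed.

Lemma sigma_seq1 x : sigma [:: x] = sigma_letter x.
Proof. by rewrite /sigma /= cats0. Qed.

Lemma iter_sigma_cat k u v : iter k sigma (u ++ v) = iter k sigma u ++ iter k sigma v.
Proof. by elim: k => //= k ->; rewrite sigma_cat. Qed.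

Lemma sigma_powS k : sigma (sigma_pow k) = sigma_pow k.+1.
Proof. by []. Qed.

Lemma sigma_powSSS k :
  sigma_pow k.+3 = sigma_pow k.+2 ++ sigma_pow k.+1 ++ sigma_pow k.
Proof.
rewrite /sigma_pow iterSr -[sigma [:: La]]/([:: La] ++ [:: Lb]) iter_sigma_cat.
congr (_ ++ _); rewrite iterSr -[sigma [:: Lb]]/([:: La] ++ [:: Lc]) iter_sigma_cat.
by rewrite [iter k.+1 _ [:: Lc]]iterSr.
Qed.

Lemma triSSS k : tri k.+3 = tri k.+2 + tri k.+1 + tri k.
Proof. by []. Qed.

Lemma size_sigma_pow k : size (sigma_pow k) = tri k.+2.
Proof.
elim/ltn_ind: k => -[|[|[|k]]] // IH.
by rewrite sigma_powSSS !size_cat !IH ?(triSSS k.+2); lia.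
Qed.

Lemma leq_tri : {homo tri : i j / i <= j}.
Proof.
by apply: homo_leq leqnn leq_trans _ => -[|[|[|k]]] //; rewrite [tri k.+4]triSSS; lia.
Qed.

Lemma tri_gt0 k : 0 < tri k.+1.
Proof. exact: leq_tri 1 k.+1 _. Qed.

Lemma ltn_tri_id k : k < tri k.+2.
Proof. by elim: k => // k IH; rewrite triSSS; have := tri_gt0 k; lia. Qed.

Lemma sigma_pow_prefix k k' : k <= k' -> exists u, sigma_pow k' = sigma_pow k ++ u.
Proof.
have sigma_powS_prefix j : exists v, sigma_pow j.+1 = sigma_pow j ++ v.
  elim: j => [|j [v Ev]]; first by exists [:: Lb].
  by exists (sigma v); rewrite -[LHS]/(sigma (sigma_pow j.+1)) {1}Ev sigma_cat.
move=> /subnK <-; elim: (k' - k) => [|d [u Eu]]; first by exists [::]; rewrite cats0.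
have [v Ev] := sigma_powS_prefix (d + k).
by exists (u ++ v); rewrite addSn Ev Eu catA.
Qed.

(* The letter of index i (counting from 0) of the fixed point: the words [sigma_pow k]
   are prefixes of one another and [sigma_pow i.+1] is longer than i. *)
Definition T (i : nat) : letter := nth La (sigma_pow i.+1) i.

Lemma nth_sigma_pow k i : i < size (sigma_pow k) -> nth La (sigma_pow k) i = T i.
Proof.
move=> lt_i; rewrite /T.
case: (leqP k i.+1) => [/sigma_pow_prefix | /ltnW/sigma_pow_prefix] [u ->].
  by rewrite nth_cat lt_i.
by rewrite nth_cat size_sigma_pow (leq_trans _ (ltn_tri_id _)).
Qed.

Definition seg (x len : nat) : seq letter := map T (iota x len).

Lemma size_seg x len : size (seg x len) = len.
Proof. by rewrite size_map size_iota. Qed.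

Lemma nth_seg x len i : i < len -> nth La (seg x len) i = T (x + i).
Proof. by move=> lt_i; rewrite (nth_map 0) ?size_iota // nth_iota. Qed.

Lemma segD x a b : seg x (a + b) = seg x a ++ seg (x + a) b.
Proof. by rewrite /seg iotaD map_cat. Qed.

Lemma seg1 x : seg x 1 = [:: T x].
Proof. by []. Qed.

Lemma take_seg x len l : take l (seg x len) = seg x (minn l len).
Proof. by rewrite /seg -map_take take_iota. Qed.

Lemma drop_seg x len d : drop d (seg x len) = seg (x + d) (len - d).
Proof. by rewrite /seg -map_drop drop_iota. Qed.

Lemma seg_within y L w o M : seg y L = w -> o + M <= L -> seg (y + o) M = take M (drop o w).
Proof. by move=> <- le_oM; rewrite drop_seg take_seg (minn_idPl _) //; lia. Qed.

Lemma take_sigma_pow n k : n <= size (sigma_pow k) -> take n (sigma_pow k) = seg 0 n.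
Proof.
move=> le_n; apply: (@eq_from_nth _ La) => [|i]; rewrite size_takel // ?size_seg // => lt_i.
by rewrite nth_take // nth_seg // nth_sigma_pow //; lia.
Qed.

Lemma Tpref_seg n : Tpref n = seg 0 n.
Proof. by rewrite /Tpref take_sigma_pow // size_sigma_pow; have := ltn_tri_id n; lia. Qed.

(** * Desubstitution *)

(* As sigma(T) = T, the image of the letter of index j occupies the indices
   from [pos j] to [pos j.+1 - 1]. *)
Definition pos (j : nat) : nat := size (sigma (seg 0 j)).

Lemma sigma_seg0 j : sigma (seg 0 j) = seg 0 (pos j).
Proof.
have le_j : j <= size (sigma_pow j) by rewrite size_sigma_pow; have := ltn_tri_id j; lia.
have Esig : sigma_pow j.+1 = sigma (seg 0 j) ++ sigma (drop j (sigma_pow j)).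
  by rewrite -(take_sigma_pow le_j) -sigma_cat cat_take_drop.
rewrite -[RHS](take_sigma_pow (k := j.+1)); last by rewrite Esig size_cat /pos leq_addr.
by rewrite Esig take_size_cat.
Qed.

Lemma seg0_posS j : seg 0 (pos j.+1) = seg 0 (pos j) ++ sigma_letter (T j).
Proof. by rewrite -!sigma_seg0 -addn1 segD sigma_cat seg1 sigma_seq1. Qed.

Lemma posS j : pos j.+1 = pos j + size (sigma_letter (T j)).
Proof. by rewrite -[pos j.+1](size_seg 0) seg0_posS size_cat size_seg. Qed.

Lemma T_posD j i : i < size (sigma_letter (T j)) ->
  T (pos j + i) = nth La (sigma_letter (T j)) i.
Proof.
move=> lt_i; have := congr1 (nth La ^~ (pos j + i)) (seg0_posS j).
by rewrite nth_seg ?posS ?ltn_add2l // nth_cat size_seg ltnNge leq_addr addKn.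
Qed.

Definition next_letter (x : letter) : letter :=
  match x with La => Lb | Lb => Lc | Lc => La end.

Lemma next_letter_inj : injective next_letter.
Proof. by do 2!case. Qed.

Lemma posS_letter j : pos j.+1 = pos j + (if T j == Lc then 1 else 2).
Proof. by rewrite posS; case: (T j). Qed.

Lemma T_pos j : T (pos j) = La.
Proof. by rewrite -[pos j]addn0 T_posD //; case: (T j). Qed.

Lemma T_posS j : T (pos j).+1 = next_letter (T j).
Proof.
case E: (T j); last by have := T_pos j.+1; rewrite posS_letter E addn1.
all: by rewrite -addn1 T_posD ?E.
Qed.

Lemma T_pos_pred j : T (pos j.+1).-1 = next_letter (T j).
Proof.
rewrite posS_letter; case E: (T j) => /=; last by rewrite addn1 T_pos.
all: by rewrite addn2 -addn1 T_posD ?E.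
Qed.

Lemma pos_ltS j : pos j < pos j.+1.
Proof. by rewrite posS_letter; case: ifP => _; lia. Qed.

Lemma leq_pos : {mono pos : j j' / j <= j'}.
Proof. exact: leq_mono (homo_ltn ltn_trans pos_ltS). Qed.

Lemma ltn_pos : {mono pos : j j' / j < j'}.
Proof. exact: leqW_mono leq_pos. Qed.

Lemma leq_pos_id j : j <= pos j.
Proof. by elim: j => // j IH; apply: leq_ltn_trans IH (pos_ltS j). Qed.

Lemma pos_cover i : exists j, pos j <= i < pos j.+1.
Proof.
elim: i => [|i [j /andP [le_ji lt_ij]]]; first by exists 0; exact: pos_ltS 0.
case: (ltnP i.+1 (pos j.+1)) => [lt_i|le_i]; first by exists j; rewrite lt_i ltnW.
by exists j.+1; rewrite le_i (leq_trans _ (pos_ltS j.+1)).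
Qed.

Lemma pos_or_posS i : exists j, i = pos j \/ (i = (pos j).+1 /\ T j != Lc).
Proof.
have [j] := pos_cover i; rewrite posS_letter => cover_i; exists j.
move: cover_i; case: (T j == Lc) => /= cover_i; first by left; lia.
by have [->|ne_i] := eqVneq i (pos j); [left | right; split => //; lia].
Qed.

Lemma non_a_isolated i : T i != La -> [/\ 0 < i, T i.-1 = La & T i.+1 = La].
Proof.
move=> Ti; have [j [Ei|[-> not_c]]] := pos_or_posS i; first by rewrite Ei T_pos in Ti.
split => //; first by rewrite T_pos.
by have := T_pos j.+1; rewrite posS_letter (negbTE not_c) addn2.
Qed.

Lemma a_at_pos i : T i = La -> exists j, i = pos j.
Proof.
move=> Ti; have [j [->|[Ei not_c]]] := pos_or_posS i; first by exists j.
by move: Ti not_c; rewrite Ei T_posS; case: (T j).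
Qed.

Lemma no_aaa i : T i = La -> T i.+1 = La -> T i.+2 = La -> False.
Proof.
move=> /a_at_pos [j ->]; rewrite T_posS; case Tj: (T j) => // _.
have [|_ _ Tj1] := @non_a_isolated j; first by rewrite Tj.
have posSj : pos j.+1 = (pos j).+1 by rewrite posS_letter Tj addn1.
by rewrite -posSj T_posS Tj1.
Qed.

Lemma pos_gap2 j : pos j + 3 <= pos j.+2.
Proof.
rewrite !posS_letter; case: eqP => [Tj|_]; last by case: ifP; lia.
have [|_ _ ->] := @non_a_isolated j; first by rewrite Tj.
by rewrite /=; lia.
Qed.

Lemma pos_gap j q : 1 < q -> pos j + q < pos (j + q).
Proof.
elim: q => [|[|[|q]] IH] // _; first by have := pos_gap2 j; rewrite [j + 2]addn2; lia.
by have := IH isT; have := pos_ltS (j + q.+2); rewrite !addnS; lia.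
Qed.

Lemma sigma_seg u len : sigma (seg u len) = seg (pos u) (pos (u + len) - pos u).
Proof.
have := congr1 (drop (pos u)) (sigma_seg0 (u + len)); rewrite drop_seg add0n => <-.
by rewrite -{1}[u]add0n segD sigma_cat sigma_seg0 drop_size_cat ?size_seg.
Qed.

Lemma seg_pos u w : u <= w ->
  seg (pos u) ((pos w).+1 - pos u) = sigma (seg u (w - u)) ++ [:: La].
Proof.
move=> le_uw; have le_pos : pos u <= pos w by rewrite leq_pos.
by rewrite sigma_seg subnKC // subSn // -addn1 segD subnKC // seg1 T_pos.
Qed.

(** * Periods and maximal runs *)

Definition per (p s e : nat) := forall i, s <= i -> i + p < e -> T i = T (i + p).

Definition maxrun (p s e : nat) :=
  [/\ per p s e, 0 < s -> T s.-1 <> T (s.-1 + p) & T (e - p) <> T e].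

Lemma per_sub p s e s' e' : per p s e -> s <= s' -> e' <= e -> per p s' e'.
Proof. by move=> per_p le_s le_e i le_i lt_i; apply: per_p; lia. Qed.

Lemma per_seg d y L : per d y (y + L + d) <-> seg y L = seg (y + d) L.
Proof.
split=> [per_d | eq_seg i le_i lt_i].
  apply: (@eq_from_nth _ La) => [|i]; rewrite !size_seg // => lt_i.
  by rewrite !nth_seg // addnAC; apply: per_d; lia.
have := congr1 (nth La ^~ (i - y)) eq_seg.
by rewrite !nth_seg; [rewrite addnAC subnKC | lia..].
Qed.

Lemma per_transfer d x y L : seg x L = seg y L -> per d y (y + L) -> per d x (x + L).
Proof.
move=> eq_xy per_y i le_xi lt_i.
have nthE j : j < L -> T (x + j) = T (y + j).
  by move=> lt_j; rewrite -(nth_seg x lt_j) -(nth_seg y lt_j) eq_xy.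
rewrite -(subnKC le_xi) in lt_i *; move: (i - x) lt_i => j lt_j.
rewrite -addnA !nthE; try lia.
by rewrite addnA; apply: per_y; lia.
Qed.

Lemma maxrun_start_a p s e : maxrun p s e -> s + p < e -> T s = La.
Proof.
case=> per_p max_l _ lt_spe; apply/eqP/negPn/negP => Ts.
have [s_gt0 Tsm _] := non_a_isolated Ts.
have Tsp : T (s + p) != La by rewrite -per_p.
have [_ Tspm _] := non_a_isolated Tsp.
by apply: (max_l s_gt0); rewrite Tsm -Tspm; congr T; lia.
Qed.

Lemma maxrun_end_a p s e : maxrun p s e -> s + p < e -> T e.-1 = La.
Proof.
case=> per_p _ max_r lt_spe; apply/eqP/negPn/negP => Te.
have [_ _ Te1] := non_a_isolated Te.
have Tep : T (e.-1 - p) != La by rewrite (per_p (e.-1 - p)) ?subnK; lia.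
have [_ _ Tep1] := non_a_isolated Tep.
have e_gt0 : 0 < e by lia.
by apply: max_r; rewrite -(prednK e_gt0) Te1 -Tep1; congr T; lia.
Qed.

(* A run of period p starting at the image position [pos u], whose shift [pos u + p]
   is the image position [pos (u + q)], is the sigma-image of a run of period q. *)
Section Desubstitution.

Variables p u w q : nat.
Hypotheses (per_p : per p (pos u) (pos w).+1) (pos_uq : pos (u + q) = pos u + p).

Let T_step j : u <= j -> pos (j + q) = pos j + p -> j + q < w -> T j = T (j + q).
Proof.
move=> le_uj pos_jq lt_jqw; apply: next_letter_inj; rewrite -!T_posS pos_jq -addSn.
by apply: per_p; [rewrite leqW ?leq_pos | rewrite addSn -pos_jq ltnS ltn_pos].
Qed.

Lemma pos_shift j : u <= j -> j + q <= w -> pos (j + q) = pos j + p.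
Proof.
elim: j => [|j IH]; first by rewrite leqn0 => /eqP <-.
rewrite leq_eqVlt => /predU1P[<- // | le_uj lt_jqw].
have IHj := IH le_uj (ltnW lt_jqw).
by rewrite addSn !posS IHj -(T_step le_uj IHj lt_jqw) addnAC.
Qed.

Lemma pos_shiftB j : u + q <= j -> j <= w -> pos j = pos (j - q) + p.
Proof.
by move=> le_uqj le_jw; rewrite -(pos_shift (j := j - q)); [rewrite subnK | lia..]; lia.
Qed.

Lemma per_desubst : per q u w.
Proof.
move=> j le_uj lt_jqw; apply: T_step => //.
exact: pos_shift le_uj (ltnW lt_jqw).
Qed.

Lemma desubst_period_lt : 1 < p -> q < p.
Proof.
move=> p_gt1; case: (ltnP q 2) => [|q_gt1]; first by lia.
by have := pos_gap u q_gt1; rewrite pos_uq ltn_add2l.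
Qed.

Lemma desubst_max_left :
  (0 < pos u -> T (pos u).-1 <> T ((pos u).-1 + p)) -> 0 < u -> T u.-1 <> T (u.-1 + q).
Proof.
move=> max_l u_gt0 eqT; have le_upos := leq_pos_id u.
apply: max_l; first exact: leq_trans le_upos.
have -> : (pos u).-1 + p = (pos (u.-1 + q).+1).-1 by rewrite -addSn prednK // pos_uq; lia.
by rewrite -{1}(prednK u_gt0) !T_pos_pred eqT.
Qed.

Lemma desubst_max_right :
  T ((pos w).+1 - p) <> T (pos w).+1 -> u + q <= w -> T (w - q) <> T w.
Proof.
move=> max_r le_uqw eqT; apply: max_r.
by rewrite {1}(pos_shiftB le_uqw) // -addSn addnK !T_posS eqT.
Qed.

Lemma desubst_long :
  1 < p -> pos u + 3 * p <= (pos w).+2 -> u + q <= w -> u + 3 * q <= w + 1.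
Proof.
move=> p_gt1 long le_uqw; rewrite leqNgt; apply/negP => short.
have pos_w := pos_shiftB le_uqw (leqnn w).
case: (leqP (u + q) (w - q)) => [le_uq | lt_wq].
  have pos_wq := pos_shiftB le_uq (leq_subr q w).
  have := pos_gap2 (w - q - q).
  have : pos (w - q - q).+2 <= pos (u + q) by rewrite leq_pos; lia.
  by lia.
have : pos (w - q) < pos (u + q) by rewrite ltn_pos.
lia.
Qed.

End Desubstitution.

Lemma maxrun_desubst p s e : 1 < p -> maxrun p s e -> s + 3 * p <= e + 1 ->
  exists u w q, [/\ s = pos u, e = (pos w).+1, pos (u + q) = pos u + p, 0 < q < p
                  & maxrun q u w] /\ u + 3 * q <= w + 1.
Proof.
move=> p_gt1 run long; have lt_spe : s + p < e by lia.
have [u s_pos] := a_at_pos (maxrun_start_a run lt_spe).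
have [w e_pos] := a_at_pos (maxrun_end_a run lt_spe).
have Tsp : T (s + p) = La by case: (run) => per_p _ _; rewrite -per_p // (maxrun_start_a run).
have [v sp_pos] := a_at_pos Tsp.
have lt_uv : u < v by rewrite -ltn_pos -sp_pos -s_pos; lia.
have pos_uq : pos (u + (v - u)) = pos u + p by rewrite (subnKC (ltnW lt_uv)) -sp_pos s_pos.
have le_uqw : u + (v - u) <= w by rewrite -leq_pos pos_uq; lia.
have {e_pos} e_eq : e = (pos w).+1 by lia.
subst s e; case: run => per_p max_l max_r.
exists u, w, (v - u); split; last by apply: desubst_long per_p pos_uq p_gt1 _ le_uqw; lia.
split=> //; first by rewrite subn_gt0 lt_uv (desubst_period_lt pos_uq).
split; [exact: per_desubst per_p pos_uq | exact: desubst_max_left pos_uq max_l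
        | exact: desubst_max_right per_p pos_uq max_r le_uqw].
Qed.

Lemma T_not_eventually_periodic p s : 0 < p -> ~ (forall i, s <= i -> T i = T (i + p)).
Proof.
elim/ltn_ind: p s => p IH s p_gt0 per_p.
have le_s_pos : s <= pos s := leq_pos_id s.
case: (ltnP 1 p) => [p_gt1 | p_le1]; last first.
  have p1 : p = 1 by lia.
  have := per_p (pos (pos s)) (leq_trans le_s_pos (leq_pos_id _)).
  by rewrite p1 addn1 T_posS !T_pos.
have per_pos e : per p (pos s) e.
  by move=> i le_i _; apply: per_p; apply: leq_trans le_i.
have [v sp_pos] : exists v, pos s + p = pos v.
  by apply: a_at_pos; rewrite -per_p ?T_pos.
have lt_sv : s < v by rewrite -ltn_pos -sp_pos; lia.
have pos_sq : pos (s + (v - s)) = pos s + p by rewrite (subnKC (ltnW lt_sv)).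
apply: (IH (v - s) _ s); first exact: desubst_period_lt pos_sq p_gt1.
  by rewrite subn_gt0.
move=> j le_sj.
exact: (per_desubst (w := (j + (v - s)).+1) (per_pos _) pos_sq) le_sj (ltnSn _).
Qed.

Lemma per_extend_left p s0 e : per p s0 e ->
  exists s, [/\ s <= s0, per p s e & (0 < s -> T s.-1 <> T (s.-1 + p))].
Proof.
elim: s0 => [|s0 IH] per_p; first by exists 0.
case: (T s0 =P T (s0 + p)) => [eqT | neqT]; last by exists s0.+1.
have [|s [le_s per_s max_l]] := IH.
  by move=> i; rewrite leq_eqVlt => /predU1P[<- | /per_p].
by exists s; split => //; apply: leqW.
Qed.

Lemma per_maxrun p s0 n : 0 < p -> per p s0 n -> s0 + p <= n ->
  exists s e, [/\ s <= s0, n <= e & maxrun p s e].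
Proof.
move=> p_gt0 per_p le_n.
have ex_fail : exists i, (s0 <= i) && (T i != T (i + p)).
  have [i fail_i] := not_all_ex_not _ _ (@T_not_eventually_periodic p s0 p_gt0).
  have [le_i neqT] := imply_to_and _ _ fail_i.
  by exists i; rewrite le_i; apply/eqP.
case: (ex_minnP ex_fail) => i /andP[le_i /eqP neqT] min_i.
have per_i : per p s0 (i + p).
  move=> j le_j lt_j; apply/eqP; apply: contraTT lt_j => neqTj.
  by rewrite -leqNgt leq_add2r min_i // le_j.
have le_ni : n <= i + p.
  by rewrite leqNgt; apply/negP => lt_ip; apply/neqT/per_p.
have [s [le_s per_s max_l]] := per_extend_left per_i.
by exists s, (i + p); split => //; split => //; rewrite addnK.
Qed.

(** * The runs F_k *)

(* [t k] is the paper's t_k; [F k] first occurs at index [P k]. *)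
Definition t (k : nat) : nat := tri k.+2.

Lemma t_gt0 k : 0 < t k.
Proof. exact: tri_gt0. Qed.

Lemma t_inj : injective t.
Proof.
apply: incn_inj; apply: leq_mono => i j.
by apply: homo_ltn ltn_trans _ i j => k; rewrite /t triSSS; have := tri_gt0 k; lia.
Qed.

Fixpoint G (k : nat) : seq letter :=
  if k is k'.+1 then sigma_pow k' ++ G k' else [::].

Definition F (k : nat) : seq letter := sigma_pow k ++ sigma_pow k ++ G k.

Definition P (k : nat) : nat := tri k.+4 + tri k.+3.

Lemma G_sigma k : G k.+1 = sigma (G k) ++ [:: La].
Proof. by elim: k => //= k IH; rewrite sigma_cat -catA -IH. Qed.

Lemma F_sigma k : F k.+1 = sigma (F k) ++ [:: La].
Proof. by rewrite /F G_sigma !sigma_cat -!catA. Qed.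

Lemma size_GS k : size (G k.+1) = t k + size (G k).
Proof. by rewrite /= size_cat size_sigma_pow. Qed.

Lemma size_F k : size (F k) = 2 * t k + size (G k).
Proof. by rewrite /F /t !size_cat size_sigma_pow; lia. Qed.

Lemma size_G_lt k : size (G k) < 2 * t k.
Proof.
elim: k => // -[|k] IH //; rewrite /t in IH; rewrite size_GS /t.
by have := leq_tri (leqnSn k); have := triSSS k; have := triSSS k.+1; lia.
Qed.

Lemma take_F k : take (t k) (F k) = sigma_pow k.
Proof. by rewrite take_size_cat ?size_sigma_pow. Qed.

Lemma pos_P k : pos (P k) = P k.+1.
Proof.
have prefix_P : seg 0 (P k) = sigma_pow k.+2 ++ sigma_pow k.+1.
  rewrite -(take_sigma_pow (k := k.+3)); last first.
    by rewrite size_sigma_pow /P [tri k.+2.+3]triSSS; lia.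
  by rewrite sigma_powSSS catA take_size_cat // size_cat !size_sigma_pow.
by rewrite /pos prefix_P sigma_cat !sigma_powS size_cat !size_sigma_pow.
Qed.

Lemma maxrun1 s e : maxrun 1 s e -> s + 3 <= e + 1 -> seg s (e - s) = F 0 /\ P 0 <= s.
Proof.
move=> run long; have lt_s1e : s + 1 < e by lia.
have Ts := maxrun_start_a run lt_s1e; have [per1 _ _] := run.
have Ts1 : T s.+1 = La by rewrite -addn1 -(per1 s (leqnn s) lt_s1e).
have e_eq : e = s + 2.
  case: (ltnP e (s + 3)) => [|le_e]; first by lia.
  by case: (no_aaa Ts Ts1); rewrite -addn1 -(per1 s.+1 (leqnSn s)) ?addn1 //; lia.
split; first by rewrite e_eq addKn /seg /= Ts Ts1.
(* The first occurrence of aa in T = abacabaa... is at index 6. *)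
rewrite leqNgt; apply/negP => lt_s6; move: Ts Ts1; clear -lt_s6.
by case: s lt_s6 => [|[|[|[|[|[|s]]]]]] //; vm_compute.
Qed.

Lemma maxrun_F p s e : 0 < p -> maxrun p s e -> s + 3 * p <= e + 1 ->
  exists k, [/\ p = t k, seg s (e - s) = F k & P k <= s].
Proof.
elim/ltn_ind: p s e => p IH s e p_gt0 run long.
case: (ltnP 1 p) => [p_gt1 | p_le1]; last first.
  have p1 : p = 1 by lia.
  by subst p; exists 0; have [] := maxrun1 run long.
have [u [w [q [[-> -> pos_uq /andP[q_gt0 q_lt_p] run'] long']]]] :=
  maxrun_desubst p_gt1 run long.
have [k [q_eq Fk P_le]] := IH q q_lt_p u w q_gt0 run' long'.
have le_uw : u <= w by lia.
exists k.+1; split; last by rewrite -pos_P leq_pos.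
  have seg_uq : seg u q = sigma_pow k.
    by rewrite -take_F -Fk take_seg q_eq (minn_idPl _) //; lia.
  have -> : p = size (sigma (seg u q)) by rewrite sigma_seg size_seg pos_uq addKn.
  by rewrite seg_uq sigma_powS size_sigma_pow.
by rewrite seg_pos // Fk F_sigma.
Qed.

Lemma seg_P_F k : seg (P k) (size (F k)) = F k.
Proof.
elim: k => [|k IH]; first by vm_compute.
have E := seg_pos (leq_addr (size (F k)) (P k)).
rewrite addKn IH pos_P -F_sigma in E.
by rewrite -E size_seg.
Qed.

Lemma G_prefix k : prefix (G k) (sigma_pow k ++ G k).
Proof.
elim: k => // k /prefixP [Y EY].
have sizeY : size Y = t k.
  by have := congr1 size EY; rewrite !size_cat size_sigma_pow /t; lia.
case: Y EY sizeY => [|y Y] EY sizeY.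
  by have := tri_gt0 k.+1; rewrite -[tri _]/(t k) -sizeY.
apply/prefixP; exists (behead (sigma_letter y) ++ sigma Y ++ [:: La]).
rewrite G_sigma -sigma_powS catA -sigma_cat EY sigma_cat -!catA.
by case: y {EY sizeY}.
Qed.

Lemma F_period k : drop (t k) (F k) = take (size (F k) - t k) (F k).
Proof.
have := G_prefix k; rewrite prefixE => /eqP preG.
have -> : size (F k) - t k = t k + size (G k) by rewrite size_F; lia.
rewrite /F /t drop_size_cat ?size_sigma_pow // take_cat size_sigma_pow.
by rewrite ltnNge leq_addr addKn preG.
Qed.

Lemma per_P_F k : per (t k) (P k) (P k + size (F k)).
Proof.
have le_tF : t k <= size (F k) by rewrite size_F; lia.
rewrite -(subnK le_tF) addnA; apply/per_seg.
have := congr1 (take (size (F k) - t k)) (seg_P_F k).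
rewrite take_seg (minn_idPl (leq_subr _ _)) => ->.
have := congr1 (drop (t k)) (seg_P_F k); rewrite drop_seg => ->.
by rewrite F_period.
Qed.

Lemma per_in_F l x L : 0 < l -> 3 * l <= L -> per l x (x + L) ->
  exists k s, [/\ l = t k, P k <= s <= x, x + L <= s + size (F k)
                & seg s (size (F k)) = F k].
Proof.
move=> l_gt0 long per_l.
have [|s [e [le_sx le_e run]]] := per_maxrun l_gt0 per_l; first by lia.
have [|k [l_eq segF P_le]] := maxrun_F l_gt0 run; first by lia.
have size_e : size (F k) = e - s by rewrite -segF size_seg.
by exists k, s; rewrite P_le le_sx -segF size_seg; split => //; lia.
Qed.

Lemma no_fourth_power d y : 0 < d -> ~ per d y (y + 4 * d).
Proof.
move=> d_gt0 /(per_in_F d_gt0) [|k [s [d_eq /andP[_ le_sy] long _]]]; first by lia.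
by have := size_G_lt k; rewrite size_F in long; lia.
Qed.

(** * New cubes *)

Definition window (n k : nat) : bool := P k + 3 * t k <= n <= P k + size (F k).

Lemma window_cube_first n k x :
  window n k -> x + 3 * t k < n -> seg x (3 * t k) <> seg (n - 3 * t k) (3 * t k).
Proof.
move=> /andP[lo hi] lt_xn eq_cube.
have per_n : per (t k) (n - 3 * t k) (n - 3 * t k + 3 * t k).
  by apply: (per_sub (@per_P_F k)); lia.
have [k' [s [/t_inj <- /andP[P_le le_sx] le_end segF]]] :=
  per_in_F (t_gt0 k) (leqnn _) (per_transfer eq_cube per_n).
have := size_G_lt k; rewrite size_F in hi le_end => size_G.
(* Both cubes lie in the occurrence of F k at s, at offsets differing by d < t k;
   this gives a fourth power of period d. *)
set d := s + (n - 3 * t k - P k) - x.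
have cube_d : seg x (3 * t k) = seg (x + d) (3 * t k).
  have le_Pn : P k <= n - 3 * t k by lia.
  rewrite eq_cube -[n - 3 * t k](subnKC le_Pn) (seg_within (seg_P_F k)) ?size_F; last by lia.
  by rewrite -(seg_within segF) ?size_F; [congr seg | ]; lia.
apply: (@no_fourth_power d x); first by lia.
by apply: (per_sub (proj2 (per_seg _ _ _) cube_d)); lia.
Qed.

Lemma cube_first_window n l : 0 < l -> 3 * l <= n -> per l (n - 3 * l) n ->
    (forall x, x + 3 * l < n -> seg x (3 * l) <> seg (n - 3 * l) (3 * l)) ->
  exists2 k, l = t k & window n k.
Proof.
move=> l_gt0 le_n per_l first; rewrite -{2}(subnK le_n) in per_l.
have [k [s [l_eq /andP[P_le le_s] le_end segF]]] := per_in_F l_gt0 (leqnn _) per_l.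
exists k => //; rewrite /window -l_eq.
case: (ltnP (P k) s) => [lt_Ps | le_sP]; last by apply/andP; split; lia.
case: (first (P k + (n - 3 * l - s))); first by lia.
rewrite -[in RHS](subnKC le_s) (seg_within segF); last by lia.
by rewrite (seg_within (seg_P_F k)); last by lia.
Qed.

Lemma per_cube x l : per l x (x + 3 * l) <->
  seg x (3 * l) = seg (x + 2 * l) l ++ seg (x + 2 * l) l ++ seg (x + 2 * l) l.
Proof.
have -> : x + 3 * l = x + (l + l) + l by lia.
have -> : 3 * l = l + l + l by lia.
rewrite (_ : x + 2 * l = x + l + l); last by lia.
rewrite per_seg !segD !addnA -catA.
split=> [/eqP | /eqP]; rewrite !eqseq_cat ?size_seg //.
  by case/andP=> /eqP -> /eqP ->.
by case/and3P=> /eqP -> /eqP ->.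
Qed.

Lemma suffix_seg0 u n :
  suffix u (seg 0 n) = (size u <= n) && (seg (n - size u) (size u) == u).
Proof.
rewrite suffixE size_seg drop_seg add0n; case: leqP => [le_un | lt_nu].
  by rewrite subKn.
by apply/negbTE/eqP => /(congr1 size); rewrite size_seg; lia.
Qed.

Lemma infix_seg0P u n :
  reflect (exists2 x, x + size u <= n & seg x (size u) = u) (infix u (seg 0 n)).
Proof.
apply: (iffP (@infixP _ u (seg 0 n))) => [[v [v' E]] | [x le_x <-]].
  have size_n : n = size v + size u + size v' by rewrite -(size_seg 0 n) E !size_cat addnA.
  exists (size v); first by lia.
  by rewrite -(add0n (size v)) (seg_within E) ?drop_size_cat ?take_size_cat //; lia.
exists (seg 0 x), (seg (x + size u) (n - (x + size u))).
by rewrite -segD -[x in seg x]add0n -segD; congr seg; lia.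
Qed.

Lemma new_cubeE n l : 0 < l -> l <= n ->
  new_cube n (seg (n - l) l) <->
  [/\ 3 * l <= n, per l (n - 3 * l) n
    & forall x, x + 3 * l < n -> seg x (3 * l) <> seg (n - 3 * l) (3 * l)].
Proof.
move=> l_gt0 le_ln; set w := seg (n - l) l.
have size_www : size (w ++ w ++ w) = 3 * l by rewrite !size_cat size_seg; lia.
rewrite /new_cube !Tpref_seg size_seg l_gt0 suffix_seg0 size_www /=.
case: (leqP (3 * l) n) => [le_n | lt_n]; last by split=> // -[]; lia.
have cubeE : per l (n - 3 * l) n <-> seg (n - 3 * l) (3 * l) = w ++ w ++ w.
  by rewrite -[X in per _ _ X](subnK le_n) per_cube (_ : n - 3 * l + 2 * l = n - l) //; lia.
split=> [/andP[/eqP cube not_inf] | [_ /cubeE cube first]].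
  split=> // [|x lt_x eq_x]; first exact/cubeE.
  apply: (negP not_inf); apply/infix_seg0P; exists x; rewrite size_www; first by lia.
  by rewrite eq_x cube.
rewrite cube eqxx /=; apply/infix_seg0P => -[x]; rewrite size_www => le_x eq_x.
by apply: (first x); [lia | rewrite eq_x cube].
Qed.

Lemma new_cube_window n l : 0 < l -> l <= n ->
  new_cube n (seg (n - l) l) <-> exists2 k, l = t k & window n k.
Proof.
move=> l_gt0 le_ln; rewrite new_cubeE //.
split=> [[le_n per_l first] | [k -> win]]; first exact: cube_first_window.
have /andP[lo hi] := win.
split=> [|| x]; [lia | apply: (per_sub (@per_P_F k)); lia | exact: window_cube_first win].
Qed.

Lemma new_cube_seg n w : new_cube n w -> 0 < size w <= n /\ w = seg (n - size w) (size w).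
Proof.
case/and3P=> w_gt0; rewrite Tpref_seg suffix_seg0 => /andP[le_n /eqP cube] _.
have size_www : size (w ++ w ++ w) = 3 * size w by rewrite !size_cat; lia.
rewrite size_www in le_n cube; split; first by rewrite w_gt0; lia.
have size_ww : size (w ++ w) = 2 * size w by rewrite size_cat; lia.
have := congr1 (drop (2 * size w)) cube; rewrite drop_seg catA (drop_size_cat _ size_ww).
have -> : n - 3 * size w + 2 * size w = n - size w by lia.
by have -> : 3 * size w - 2 * size w = size w by lia.
Qed.

Lemma c_count n : c n = count (fun l => new_cube n (seg (n - l) l)) (iota 1 n).
Proof.
rewrite /c -(count_map (fun l => seg (n - l) l) (new_cube n)) -!size_filter.
apply/perm_size/uniq_perm.
- exact/filter_uniq/undup_uniq.
- rewrite filter_uniq // map_inj_in_uniq ?iota_uniq // => a b _ _ /(congr1 size).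
  by rewrite !size_seg.
move=> w; rewrite !mem_filter; case new_w: (new_cube n w) => //; rewrite !andTb.
have [/andP[w_gt0 le_wn] Ew] := new_cube_seg new_w.
have -> : w \in [seq seg (n - l) l | l <- iota 1 n].
  by rewrite {1}Ew; apply: (map_f (fun l => seg (n - l) l)); rewrite mem_iota; lia.
rewrite mem_undup Tpref_seg; apply/allpairsP; exists (n - size w, size w).
rewrite !mem_iota /= size_seg drop_seg take_seg add0n subKn // minnn -Ew.
by split=> //; lia.
Qed.

(** * Bands *)

Lemma tri_size_G k : tri k.+4 = t k + 2 * size (G k) + 3.
Proof.
elim: k => // k IH; rewrite /t in IH; rewrite size_GS /t.
by have := triSSS k.+2; lia.
Qed.

Lemma kern_size_G k : t k + size (G k) + 2 = kern (k + 5).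
Proof.
elim/ltn_ind: k => -[|[|[|k]]] // IH.
have kernSSS m : kern m.+3 = kern m.+2 + kern m.+1 + kern m - 1 by [].
rewrite (_ : k.+3 + 5 = (k + 5).+3) // kernSSS -!addSn -!IH; try lia.
rewrite !size_GS /t; have := triSSS k.+2; have := tri_size_G k; rewrite /t; lia.
Qed.

Definition band_start (m : nat) : nat := tri (m + 1) + 2 * tri (m - 2).

Lemma band_startS m : band_start m.+1 = tri (m + 2) + 2 * tri (m - 1).
Proof. by rewrite /band_start addSnnS subSS. Qed.

Lemma band_start_lt m : 1 < m -> band_start m < band_start m.+1.
Proof.
case: m => [|[|j]] // _; rewrite /band_start !addn1 !subSS !subn0.
by have := tri_gt0 j.+1; have := leq_tri (leqnSn j); have := triSSS j.+1; lia.
Qed.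

Lemma leq_band_start m m' : 1 < m -> m <= m' -> band_start m <= band_start m'.
Proof.
move=> m_gt1 /subnK <-; elim: (m' - m) => // d IH.
by rewrite addSn (leq_trans IH) // ltnW // band_start_lt //; lia.
Qed.

Lemma band_exists n : 1 < n -> exists2 m, 1 < m & band_start m <= n < band_start m.+1.
Proof.
elim: n => // n IH; case: (ltnP n 2) => [lt_n2 n_gt0 | le_2n _].
  by rewrite (_ : n = 1); [exists 2 | lia].
have [m m_gt1 /andP[lo hi]] := IH le_2n.
case: (ltnP n.+1 (band_start m.+1)) => [lt_n | le_n]; first by exists m; lia.
by exists m.+1; have := band_start_lt (leqW m_gt1); lia.
Qed.

Lemma band_unique n m m' : 1 < m -> 1 < m' ->
  band_start m <= n < band_start m.+1 -> band_start m' <= n < band_start m'.+1 -> m = m'.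
Proof.
move=> m_gt1 m'_gt1 /andP[lo hi] /andP[lo' hi'].
case: (ltngtP m m') => // lt_m; [have := leq_band_start (leqW m_gt1) lt_m
                               | have := leq_band_start (leqW m'_gt1) lt_m]; lia.
Qed.

Lemma window_startE k : P k + 3 * t k = band_start (k + 4).
Proof.
rewrite /band_start; have -> : k + 4 + 1 = k.+2.+3 by lia.
have -> : k + 4 - 2 = k.+2 by lia.
by rewrite /P /t [tri k.+2.+3]triSSS; lia.
Qed.

Lemma window_endE k : P k + size (F k) + 2 = tri (k + 5) + kern (k + 5).
Proof.
rewrite -kern_size_G size_F /P /t; have -> : k + 5 = k.+2.+3 by lia.
by rewrite [tri k.+2.+3]triSSS; lia.
Qed.

Lemma window_band n k : window n k -> band_start (k + 4) <= n < band_start (k + 4).+1.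
Proof.
case/andP; rewrite window_startE => -> hi /=; rewrite band_startS.
have -> : k + 4 + 2 = k.+3.+3 by lia.
have -> : k + 4 - 1 = k.+3 by lia.
have := size_G_lt k; rewrite size_F /P /t in hi *.
by have := triSSS k.+3; have := triSSS k.+2; have := leq_tri (leqnSn k.+2); lia.
Qed.

Lemma window_gt2 n k : window n k -> 2 < k.
Proof.
case/andP=> lo hi; have := leq_trans lo hi; rewrite leq_add2l size_F.
by case: k {lo hi} => [|[|[|k]]].
Qed.

Lemma window_unique n k k' : window n k -> window n k' -> k = k'.
Proof.
move=> /window_band win /window_band win'.
by apply/eqP; rewrite -(eqn_add2r 4) (band_unique _ _ win win') //; lia.
Qed.

Lemma c_window n k : window n k -> c n = 1.
Proof.
move=> win; rewrite c_count (@eq_in_count _ _ (pred1 (t k))).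
  have /andP[lo _] := win.
  have t_in : t k \in iota 1 n by rewrite mem_iota; have := t_gt0 k; lia.
  by rewrite count_uniq_mem ?iota_uniq // t_in.
move=> l; rewrite mem_iota => /andP[l_gt0 lt_l]; have le_ln : l <= n by lia.
apply/idP/eqP => [/(new_cube_window l_gt0 le_ln) [k' -> win'] | l_eq].
  by rewrite (window_unique win' win).
by apply/(new_cube_window l_gt0 le_ln); exists k.
Qed.

Lemma c_no_window n : (forall k, ~~ window n k) -> c n = 0.
Proof.
move=> no_win; rewrite c_count (@eq_in_count _ _ pred0) ?count_pred0 // => l.
rewrite mem_iota => /andP[l_gt0 lt_l]; have le_ln : l <= n by lia.
apply/negbTE/negP => /(new_cube_window l_gt0 le_ln) [k _]; exact/negP/no_win.
Qed.

Lemma c_band n m : 3 < m -> band_start m <= n < band_start m.+1 ->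
  c n = (n + 2 <= tri (m + 1) + kern (m + 1)).
Proof.
move=> m_gt3 band; have /andP[lo _] := band.
have -> : (n + 2 <= tri (m + 1) + kern (m + 1)) = window n (m - 4).
  rewrite /window window_startE (_ : m - 4 + 4 = m) ?lo /=; last by lia.
  by rewrite -(leq_add2r 2 n) window_endE (_ : m - 4 + 5 = m + 1) //; lia.
case win: (window n (m - 4)); first exact: c_window win.
apply: c_no_window => k; apply: contraFN win => win_k.
have k_eq := band_unique (ltn_addl k (isT : 1 < 4)) (ltnW (ltnW m_gt3))
                         (window_band win_k) band.
by rewrite -k_eq addnK.
Qed.

Theorem mainTheorem5 :
  (forall n : nat, 1 <= n <= 57 -> c n = 0) /\
  (forall n : nat, 58 <= n ->
     (exists m : nat, 2 <= m /\
        tri (m + 1) + 2 * tri (m - 2) <= n < tri (m + 2) + 2 * tri (m - 1)) /\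
     (forall m : nat, 2 <= m ->
        tri (m + 1) + 2 * tri (m - 2) <= n < tri (m + 2) + 2 * tri (m - 1) ->
        7 <= m /\ (c n = 1 <-> n + 2 <= tri (m + 1) + kern (m + 1)))).
Proof.
have band_start7 : band_start 7 = 58 by [].
split=> [n /andP[_ le_n] | n ge_n].
  apply: c_no_window => k; apply/negP => win.
  have le_7k : 7 <= k + 4 by have := window_gt2 win; lia.
  have /andP[lo _] := window_band win.
  by have := leq_band_start (isT : 1 < 7) le_7k; lia.
split=> [|m m_gt1].
  have [m m_gt1 band] := band_exists (leq_trans (isT : 1 < 58) ge_n).
  by exists m; rewrite -band_startS.
rewrite -band_startS => band; have /andP[_ hi] := band.
have m_ge7 : 7 <= m.
  rewrite leqNgt; apply/negP => lt_m7.
  by have := leq_band_start (leqW m_gt1) lt_m7; lia.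
split=> //; rewrite (c_band (_ : 3 < m) band); last by lia.
by case: (_ <= _).
Qed.
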